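(* There exist absolute constants $c,c'>0$ such that the following holds. Let $G=(V,E)$ be an unweighted undirected graph, let $\ell\ge1$ be an integer, let $V=A_0\supseteq A_1\supseteq\cdots\supseteq A_{\ell-1}\supseteq A_\ell=\emptyset$ be arbitrary nested vertex sets, and let $H$ (with weights $\omega'$) be the Thorup–Zwick edge set defined in the context. Let $0<\epsilon<1/6$ with $1/\epsilon$ an integer. Then for every $i\in\{0,1,\dots,\ell-1\}$ and every pair $x,y\in V$ with $d_G(x,y)\le(1/\epsilon)^i$, at least one of the following holds: (1) (successful) $d_H(x,y)\le d_G(x,y)+c\cdot i\cdot(1/\epsilon)^{i-1}$; (2) (failing) $d_G(x,A_{i+1})\le c'\cdot(1/\epsilon)^i$. In particular, for $i=\ell-1$ (where $d_G(x,A_\ell)=\infty$) alternative (1) always holds.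
   Context: Thorup–Zwick construction: given nested sets $V=A_0\supseteq A_1\supseteq\cdots\supseteq A_\ell=\emptyset$, write $d_G(v,S)=\min_{s\in S}d_G(v,s)$ with $d_G(v,\emptyset)=\infty$. For $v\in V$ and $j$ with $A_j\neq\emptyset$, the pivot $p_j(v)$ is a vertex of $A_j$ closest to $v$ (ties broken consistently). For $0\le i\le\ell-1$ and $u\in A_i\setminus A_{i+1}$, the bunch is $B(u)=\{v\in A_i: d_G(u,v)<d_G(u,A_{i+1})\}\cup\{p_{i+1}(u)\}$ (the pivot term omitted if $A_{i+1}=\emptyset$; thus $B(u)=A_{\ell-1}$ for $u\in A_{\ell-1}$). The edge set is $H=\{(u,v):u\in V, v\in B(u)\}\cup\{(v,p_j(v)): v\in V,\ 1\le j\le \ell-1,\ A_j\neq\emptyset\}$, each edge $(u,v)$ having weight $\omega'(u,v)=d_G(u,v)$. $d_H$ denotes shortest-path distance in the weighted graph $(V,H,\omega')$. *)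

From Stdlib Require Import ClassicalEpsilon.
From mathcomp Require Import all_boot.
Set Implicit Arguments. Unset Strict Implicit. Unset Printing Implicit Defensive.

(* Extended naturals: [None] stands for +infinity. *)
Definition oadd (x y : option nat) : option nat :=
  match x, y with Some a, Some b => Some (a + b) | _, _ => None end.
Definition omin (x y : option nat) : option nat :=
  match x, y with
  | None, _ => y | _, None => x | Some a, Some b => Some (minn a b) end.
Definition ole (x y : option nat) : bool :=
  match x, y with
  | _, None => true | None, Some _ => false | Some a, Some b => a <= b end.
Definition olt (x y : option nat) : bool :=
  match x, y with
  | None, _ => false | Some _, None => true | Some a, Some b => a < b end.

Section TZ.
Variable T : finType.
Variable e : rel T.

Definition walkk (u v : T) (k : nat) : bool :=
  [exists s : k.-tuple T, path e u s && (last u s == v)].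

Definition gdist (u v : T) : option nat :=
  match excluded_middle_informative (exists k, walkk u v k) with
  | left H => Some (ex_minn H)
  | right _ => None
  end.

Definition sdist (u : T) (S : {set T}) : option nat :=
  \big[omin/None]_(s in S) gdist u s.

Definition pivot_spec (A : nat -> {set T}) (p : nat -> T -> T) : Prop :=
  forall j v, A j != set0 ->
    p j v \in A j /\ forall a, a \in A j -> ole (gdist v (p j v)) (gdist v a).

Variables (l : nat) (A : nat -> {set T}) (p : nat -> T -> T).

Definition bunch (u v : T) : Prop :=
  exists i, [/\ i < l, u \in A i, u \notin A i.+1 &
    (v \in A i /\ olt (gdist u v) (sdist u (A i.+1)))
    \/ (A i.+1 != set0 /\ v = p i.+1 u)].

Definition Hedge (u v : T) : Prop :=
  bunch u v \/ bunch v u \/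
  exists j, [/\ 1 <= j, j <= l - 1, A j != set0 & (v = p j u \/ u = p j v)].

Fixpoint Hwalk (x : T) (s : seq T) : Prop :=
  match s with [::] => True | y :: s' => Hedge x y /\ Hwalk y s' end.

(* weight of a walk under omega'(u,v) = d_G(u,v) *)
Fixpoint wlen (x : T) (s : seq T) : option nat :=
  match s with [::] => Some 0 | y :: s' => oadd (gdist x y) (wlen y s') end.

Definition dH_le (x y : T) (K : nat) : Prop :=
  exists s, [/\ Hwalk x s, last x s = y & ole (wlen x s) (Some K)].

End TZ.

From Stdlib Require Import ClassicalEpsilon.
From mathcomp Require Import all_boot zify.
Set Implicit Arguments. Unset Strict Implicit. Unset Printing Implicit Defensive.

(* Induction on i, walking along a shortest x-y path.  For i = 0 the path is a
   single edge xy, and if x is at distance > 4 from A_1 then y is in the bunch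
   of x.  For i+1, cut the path into t = 1/epsilon segments of length at most
   t^i and apply level i to each.  If all succeed, the errors add up to
   t * 18 i t^(i-1) = 18 i t^i.  Otherwise let u be the start of the first
   failing segment and w the end of the last one: both are within O(t^i) of
   A_{i+1}, so their pivots are H-neighbours of them, and unless x is within
   4 t^(i+1) of A_{i+2} the two pivots are joined by a bunch edge.  The detour
   u, p(u), p(w), w replaces the middle part at an extra cost of
   (4 + (4 + 5) + 5) t^i = 18 t^i, so the total error is 18 (i+1) t^i. *)

Lemma ole_trans x y z : ole x y -> ole y z -> ole x z.
Proof. by case: x y z => [a|] [b|] [c|] //=; apply: leq_trans. Qed.

Lemma ole_ominl x y : ole (omin x y) x.
Proof. by case: x y => [a|] [b|] //=; rewrite ?geq_minl. Qed.

Lemma ole_ominr x y : ole (omin x y) y.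
Proof. by case: x y => [a|] [b|] //=; rewrite ?geq_minr. Qed.

Lemma omin_cases x y : omin x y = x \/ omin x y = y.
Proof. by case: x y => [a|] [b|] /=; auto; rewrite /minn; case: ifP; auto. Qed.

Lemma ole_oadd x y a b :
  ole x (Some a) -> ole y (Some b) -> ole (oadd x y) (Some (a + b)).
Proof. by case: x y => [c|] [d|] //=; apply: leq_add. Qed.

Section GraphDistance.
Variables (T : finType) (e : rel T).

Definition gdist_le u v K := ole (gdist e u v) (Some K).

Lemma gdist_le_path u s : path e u s -> gdist_le u (last u s) (size s).
Proof.
move=> es; have walk_s : walkk e u (last u s) (size s).
  by apply/existsP; exists (in_tuple s); rewrite es eqxx.
rewrite /gdist_le /gdist; case: excluded_middle_informative => [ex|no_walk].
  by case: ex_minnP => k _ /= min_k; apply: min_k.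
by case: no_walk; exists (size s).
Qed.

Lemma gdist_path u v k : gdist e u v = Some k ->
  exists s, [/\ path e u s, last u s = v & size s = k].
Proof.
rewrite /gdist; case: excluded_middle_informative => [ex|//].
case: ex_minnP => k' /existsP [s /andP [es /eqP last_s]] _ [<-].
by exists (tval s); rewrite size_tuple.
Qed.

Lemma gdist_leP u v K : gdist_le u v K ->
  exists s, [/\ path e u s, last u s = v & size s <= K].
Proof.
rewrite /gdist_le; case duv: (gdist e u v) => [k|] //= le_kK.
by have [s [es last_s size_s]] := gdist_path duv; exists s; rewrite size_s.
Qed.

Lemma gdist_le_refl u : gdist_le u u 0.
Proof. exact: (@gdist_le_path u [::]). Qed.

Lemma gdist_leW u v a b : gdist_le u v a -> a <= b -> gdist_le u v b.
Proof. by rewrite /gdist_le; case: (gdist e u v) => [k|] //=; apply: leq_trans. Qed.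

Lemma gdist_le_triangle u v w a b :
  gdist_le u v a -> gdist_le v w b -> gdist_le u w (a + b).
Proof.
move=> /gdist_leP [s1 [es1 last1 size1]] /gdist_leP [s2 [es2 last2 size2]].
have := @gdist_le_path u (s1 ++ s2).
rewrite cat_path es1 last1 es2 last_cat last1 last2 size_cat => /(_ isT) le_uw.
by apply: gdist_leW le_uw _; apply: leq_add.
Qed.

Hypothesis e_sym : symmetric e.

Lemma gdist_le_sym u v K : gdist_le u v K -> gdist_le v u K.
Proof.
move=> /gdist_leP [s [es <- size_s]].
have es' : path e (last u s) (rev (belast u s)).
  by rewrite rev_path (@eq_path _ _ e) // => a b; apply: e_sym.
have := gdist_le_path es'.
have -> : last (last u s) (rev (belast u s)) = u.
  by case: s {es size_s es'} => [|y s] //=; rewrite rev_cons last_rcons.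
by rewrite size_rev size_belast => le_K; apply: gdist_leW le_K size_s.
Qed.

End GraphDistance.

Section SetDistance.
Variables (T : finType) (e : rel T).

Lemma sdist_le_gdist u (S : {set T}) s : s \in S -> ole (sdist e u S) (gdist e u s).
Proof.
rewrite /sdist => sS; have : s \in index_enum T by rewrite mem_index_enum.
elim: (index_enum T) => [|a r IHr] //; rewrite inE big_cons => /orP [/eqP <-|s_r].
  by rewrite sS; apply: ole_ominl.
by case: ifP => _; [apply: ole_trans (ole_ominr _ _) (IHr s_r) | apply: IHr].
Qed.

Lemma sdist_le u (S : {set T}) s K :
  s \in S -> gdist_le e u s K -> ole (sdist e u S) (Some K).
Proof. by move=> sS; apply: ole_trans (sdist_le_gdist u sS). Qed.

Lemma sdist_attained u (S : {set T}) :
  sdist e u S = None \/ exists2 s, s \in S & sdist e u S = gdist e u s.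
Proof.
apply: (big_ind (fun z => z = None \/ exists2 s, s \in S & z = gdist e u s)).
- by left.
- by move=> x y Hx Hy; case: (omin_cases x y) => ->.
- by move=> s sS; right; exists s.
Qed.

Lemma sdist_leP u (S : {set T}) K :
  ole (sdist e u S) (Some K) -> exists2 s, s \in S & gdist_le e u s K.
Proof. by case: (sdist_attained u S) => [->|[s sS ->]] //; exists s. Qed.

Lemma sdist_le_triangle u v (S : {set T}) a b :
  gdist_le e u v a -> ole (sdist e v S) (Some b) -> ole (sdist e u S) (Some (a + b)).
Proof.
move=> uv /sdist_leP [s sS vs]; exact: sdist_le sS (gdist_le_triangle uv vs).
Qed.

Lemma gdist_lt_sdist u v (S : {set T}) K :
  ~~ ole (sdist e u S) (Some K) -> gdist_le e u v K -> olt (gdist e u v) (sdist e u S).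
Proof.
rewrite /gdist_le; case: (gdist e u v) => [g|] //= far le_gK.
case: (sdist_attained u S) => [->|[s sS dus]] //; rewrite dus.
move: far; rewrite dus; case: (gdist e u s) => [h|] //=.
by rewrite -!ltnNge => lt_Kh; apply: leq_ltn_trans lt_Kh.
Qed.

End SetDistance.

Section SpannerDistance.
Variables (T : finType) (e : rel T).
Variables (l : nat) (A : nat -> {set T}) (p : nat -> T -> T).

Local Notation dH_le := (dH_le e l A p).

Lemma wlen_cat x s1 s2 : wlen e x (s1 ++ s2) = oadd (wlen e x s1) (wlen e (last x s1) s2).
Proof.
elim: s1 x => [|y s1 IHs] x /=; first by case: (wlen e x s2).
rewrite IHs; case: (gdist e x y) (wlen e y s1) (wlen e (last y s1) s2) => [a|] [b|] [c|] //=.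
by rewrite addnA.
Qed.

Lemma Hwalk_cat x s1 s2 :
  Hwalk e l A p x s1 -> Hwalk e l A p (last x s1) s2 -> Hwalk e l A p x (s1 ++ s2).
Proof. by elim: s1 x => [|y s1 IHs] x //= [xy ys1] ys2; split => //; apply: IHs. Qed.

Lemma dH_le_refl x : dH_le x x 0.
Proof. by exists [::]. Qed.

Lemma dH_leW x y a b : dH_le x y a -> a <= b -> dH_le x y b.
Proof.
move=> [s [Hs last_s le_a]] le_ab; exists s; split => //.
by move: le_a; case: (wlen e x s) => [k|] //= le_ka; apply: leq_trans le_ab.
Qed.

Lemma dH_le_triangle x y z a b : dH_le x y a -> dH_le y z b -> dH_le x z (a + b).
Proof.
move=> [s1 [Hs1 last1 le_a]] [s2 [Hs2 last2 le_b]]; exists (s1 ++ s2); split.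
- by apply: Hwalk_cat; rewrite // last1.
- by rewrite last_cat last1.
- by rewrite wlen_cat last1; apply: ole_oadd.
Qed.

Lemma dH_le_edge u v K : Hedge e l A p u v -> gdist_le e u v K -> dH_le u v K.
Proof. by move=> uv le_K; exists [:: v]; split; rewrite //= -[K]addn0; apply: ole_oadd. Qed.

End SpannerDistance.

Definition tz_error (t j : nat) := 18 * j * t ^ (j - 1).

Lemma mul_tz_error t j : t * tz_error t j <= 18 * j * t ^ j.
Proof. by case: j => [|j]; rewrite /tz_error ?muln0 // subSS subn0 expnS mulnCA. Qed.

Lemma tz_errorS t j : tz_error t j.+1 = 18 * j * t ^ j + 18 * t ^ j.
Proof. by rewrite /tz_error subSS subn0 mulnSr mulnDl. Qed.

Section Levels.
Variables (T : finType) (e : rel T).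
Hypothesis e_sym : symmetric e.
Variables (l : nat) (A : nat -> {set T}) (p : nat -> T -> T).
Hypothesis A0 : A 0 = setT.
Hypothesis pivotP : pivot_spec e A p.
Variable t : nat.
Hypothesis t_gt6 : 6 < t.

Local Notation dH_le := (dH_le e l A p).
Local Notation gdist_le := (gdist_le e).

Definition close_to i u K := exists2 a, a \in A i & gdist_le u a K.

Lemma pivot_close i u K :
  close_to i u K -> [/\ A i != set0, p i u \in A i & gdist_le u (p i u) K].
Proof.
move=> [a a_Ai ua]; have A_ne : A i != set0 by apply/set0Pn; exists a.
have [pu_Ai pu_min] := pivotP u A_ne; split => //; exact: ole_trans (pu_min a a_Ai) ua.
Qed.

Definition level_claim i := forall x s, path e x s -> size s <= t ^ i ->
  dH_le x (last x s) (size s + tz_error t i)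
  \/ ole (sdist e x (A i.+1)) (Some (4 * t ^ i)).

Lemma level_claim0 : 0 < l -> level_claim 0.
Proof.
move=> l_gt0 x s es; rewrite expn0 muln1 /tz_error muln0 mul0n addn0.
case: s es => [|y [|z s]] //= es _; first by left; apply: dH_le_refl.
case: (boolP (ole (sdist e x (A 1)) (Some 4))) => far; [by right | left].
have xy : gdist_le x y 1 := @gdist_le_path _ e x [:: y] es.
have x_far : x \notin A 1.
  apply/negP => x_A1; apply: (negP far).
  exact: sdist_le x_A1 (gdist_leW (gdist_le_refl e x) _).
apply: (dH_le_edge _ xy); left; exists 0; split => //; first by rewrite A0 inE.
left; split; first by rewrite A0 inE.
exact: gdist_lt_sdist far (gdist_leW xy _).
Qed.

(* The walk is cut into k segments of at most t^j edges, each handled by the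
   level-j claim; if some segment fails, [last x s1] is the start of the first
   failing segment and [last x (s1 ++ s2)] the end of the last one. *)
Lemma level_claim_concat j : level_claim j -> forall k x s,
  path e x s -> size s <= k * t ^ j ->
  dH_le x (last x s) (size s + k * tz_error t j) \/
  exists s1 s2 s3 k1 k2,
    [/\ s = s1 ++ s2 ++ s3, k1 + k2 <= k,
        dH_le x (last x s1) (size s1 + k1 * tz_error t j),
        dH_le (last x (s1 ++ s2)) (last x s) (size s3 + k2 * tz_error t j) &
        close_to j.+1 (last x s1) (4 * t ^ j)
        /\ close_to j.+1 (last x (s1 ++ s2)) (5 * t ^ j)].
Proof.
move=> claim_j; set E := tz_error t j; set m := t ^ j.
elim=> [|k IHk] x s es size_s.
  by move: size_s; rewrite mul0n leqn0 size_eq0 => /eqP ->; left; apply: dH_le_refl.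
have [s0 [s' [eq_s size_s0 size_s']]] :
    exists s0 s', [/\ s = s0 ++ s', size s0 <= m & size s' <= k * m].
  exists (take m s), (drop m s); rewrite cat_take_drop size_take_min size_drop.
  by split => //; move: size_s; rewrite mulSn; lia.
move: es; rewrite {s size_s}eq_s cat_path => /andP [es0 es'].
set x1 := last x s0.
case: (claim_j x s0 es0 size_s0) => [dH0 | far0];
  case: (IHk x1 s' es' size_s') => [dH' | [s1 [s2 [s3 [k1 [k2 [-> le_k dH1 dH3 [c1 c2]]]]]]]].
- left; rewrite last_cat; apply: dH_leW (dH_le_triangle dH0 dH') _.
  by rewrite size_cat mulSn; lia.
- right; exists (s0 ++ s1), s2, s3, k1.+1, k2; rewrite -!catA !(last_cat x s0).
  split => //; rewrite size_cat mulSn; apply: dH_leW (dH_le_triangle dH0 dH1) _; lia.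
- have [a a_A xa] := sdist_leP far0.
  right; exists [::], s0, s', 0, k; rewrite /= last_cat; split => //.
  + exact: dH_leW (dH_le_refl e l A p x) _.
  + split; exists a => //; apply: gdist_leW
      (gdist_le_triangle (gdist_le_sym e_sym (gdist_le_path es0)) xa) _; lia.
- have [a a_A xa] := sdist_leP far0.
  right; exists [::], (s0 ++ s1 ++ s2), s3, 0, k2; rewrite /= -!catA !(last_cat x s0).
  split => //; first by lia.
  + exact: dH_leW (dH_le_refl e l A p x) _.
  + by split; first exists a.
Qed.

(* If p_{j+1}(u) were not closer to p_{j+1}(w) than to A_{j+2}, then x would be
   within 4 t^(j+1) of A_{j+2}; so p_{j+1}(w) is in the bunch of p_{j+1}(u). *)
Lemma pivot_detour j x u w d1 d2 :
  j.+1 < l -> ~~ ole (sdist e x (A j.+2)) (Some (4 * t ^ j.+1)) ->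
  close_to j.+1 u (4 * t ^ j) -> close_to j.+1 w (5 * t ^ j) ->
  gdist_le x u d1 -> gdist_le u w d2 -> d1 + d2 <= t ^ j.+1 ->
  dH_le u w (d2 + 18 * t ^ j).
Proof.
move=> lt_jl far cu cw xu uw le_d.
have le_jl : j.+1 <= l - 1 by rewrite subn1 -ltnS (ltn_predK lt_jl).
have budget : d1 + 4 * t ^ j + (4 * t ^ j + d2 + 5 * t ^ j) <= 4 * t ^ j.+1.
  by move: le_d; rewrite expnS; nia.
have [A_ne pu_A upu] := pivot_close cu; have [_ pw_A wpw] := pivot_close cw.
have xpu := gdist_le_triangle xu upu.
have pupw := gdist_le_triangle (gdist_le_triangle (gdist_le_sym e_sym upu) uw) wpw.
have Hu : Hedge e l A p u (p j.+1 u) by right; right; exists j.+1; split => //; left.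
have Hw : Hedge e l A p (p j.+1 w) w by right; right; exists j.+1; split => //; right.
have pu_far : p j.+1 u \notin A j.+2.
  apply/negP => pu_A2; apply: (negP far); apply: sdist_le pu_A2 (gdist_leW xpu _).
  exact: leq_trans (leq_addr _ _) budget.
have pw_in_bunch : olt (gdist e (p j.+1 u) (p j.+1 w)) (sdist e (p j.+1 u) (A j.+2)).
  apply: gdist_lt_sdist pupw; apply/negP => near_pu; apply: (negP far).
  by apply: ole_trans (sdist_le_triangle xpu near_pu) _.
have Hpp : Hedge e l A p (p j.+1 u) (p j.+1 w) by left; exists j.+1; split => //; left.
apply: dH_leW (dH_le_triangle (dH_le_edge Hu upu) (dH_le_triangle
  (dH_le_edge Hpp pupw) (dH_le_edge Hw (gdist_le_sym e_sym wpw)))) _.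
by clear; lia.
Qed.

Lemma level_claimS j : j.+1 < l -> level_claim j -> level_claim j.+1.
Proof.
move=> lt_jl claim_j x s es size_s; set E := tz_error t j.
have err_t : t * E <= 18 * j * t ^ j := mul_tz_error t j.
have size_s' : size s <= t * t ^ j by rewrite -expnS.
case: (level_claim_concat claim_j es size_s')
  => [dH_s | [s1 [s2 [s3 [k1 [k2 [eq_s le_k dH1 dH3 [c1 c2]]]]]]]].
  left; apply: dH_leW dH_s _; rewrite leq_add2l tz_errorS.
  exact: leq_trans err_t (leq_addr _ _).
case: (boolP (ole (sdist e x (A j.+2)) (Some (4 * t ^ j.+1)))) => far; [by right | left].
have size_eq : size s = size s1 + size s2 + size s3 by rewrite eq_s !size_cat addnA.
rewrite eq_s !cat_path in es; case/and3P: es => es1 es2 _.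
have le_d : size s1 + size s2 <= t ^ j.+1.
  by apply: leq_trans size_s; rewrite size_eq leq_addr.
have s1_s2 := gdist_le_path es2; rewrite -last_cat in s1_s2.
have detour := pivot_detour lt_jl far c1 c2 (gdist_le_path es1) s1_s2 le_d.
have le_kE : k1 * E + k2 * E <= t * E by rewrite -mulnDl leq_mul2r le_k orbT.
apply: dH_leW (dH_le_triangle dH1 (dH_le_triangle detour dH3)) _.
by rewrite tz_errorS size_eq; clear -le_kE err_t; lia.
Qed.

Lemma level_claim_lt i : i < l -> level_claim i.
Proof.
elim: i => [|i IHi] lt_il; first exact: level_claim0 lt_il.
by apply: level_claimS lt_il (IHi (ltnW lt_il)).
Qed.

End Levels.

Theorem lemma3p1 :
  exists c c' : nat, [/\ 0 < c, 0 < c' &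
  forall (T : finType) (e : rel T), symmetric e -> irreflexive e ->
  forall (l : nat) (A : nat -> {set T}) (p : nat -> T -> T),
    1 <= l ->
    A 0 = setT ->
    (forall i, i < l -> A i.+1 \subset A i) ->
    A l = set0 ->
    pivot_spec e A p ->
  forall t : nat, 6 < t ->   (* t = 1/epsilon, 0 < epsilon < 1/6 *)
  forall i, i < l ->
  forall (x y : T) (D : nat),
    gdist e x y = Some D -> D <= t ^ i ->
    dH_le e l A p x y (D + c * i * t ^ (i - 1))
    \/ ole (sdist e x (A i.+1)) (Some (c' * t ^ i))].
Proof.
exists 18, 4; split => // T e e_sym _ l A p _ A0 _ _ pivotP t t_gt6 i lt_il x y D dxy.
have [s [es <- <-]] := gdist_path dxy.
exact: (level_claim_lt e_sym A0 pivotP t_gt6 lt_il es).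
Qed.
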